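(* Let $d\ge2$ be fixed, $c_0$ a constant (e.g. $c_0=100d$), and $c,c_1>0$ fixed constants. Define $R^2=2\log n+\log((\log n)^{c_0})$, $\rho^2=2\log n-\log\log n+\log\big((c\log\log n)^{-2}\big)$, and $r=\rho-5c_1^2/\rho$. Let $y_1,\dots,y_m$ be a system of points on the sphere $S(\rho)$ of radius $\rho$ about the origin that is maximal with respect to the property $|y_i-y_j|\ge2c_1$ for $i\ne j$. Let $V_i=\{x:\ |x-y_i|\le|x-y_j|\text{ for all }j\}$ be the Voronoi region of $y_i$, let $A(R,r)=B(R)\setminus B(r)$, and let $W_i=V_i\cap A(R,r)$. Define the graph $G$ on vertex set $\{1,\dots,m\}$ in which $i\neq j$ are adjacent if and only if there exist $a_i\in W_i$, $a_j\in W_j$ and $b\in A(R,r)$ such that the segments $[a_i,b]$ and $[b,a_j]$ lie entirely in $A(R,r)$. Then the maximal degree $D$ of $G$ satisfies $D=O\big((\log\log n)^{\frac{d-1}{2}}\big)$ as $n\to\infty$.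
   Context: $B(x)$ denotes the closed ball of radius $x$ centered at the origin. $f(n)=O(g(n))$ means $f(n)\le Cg(n)$ for a constant $C$ independent of $n$ and all large $n$. *)

From HB Require Import structures.
From mathcomp Require Import all_boot all_order all_algebra.
From mathcomp Require Import all_classical all_reals all_analysis.
Set Implicit Arguments. Unset Strict Implicit. Unset Printing Implicit Defensive.
Import Order.TTheory GRing.Theory Num.Theory.
Local Open Scope ring_scope.

Definition enorm (R : realType) (d : nat) (x : 'rV[R]_d) : R :=
  Num.sqrt (\sum_(k < d) x ord0 k ^+ 2).

Definition in_annulus (R : realType) (d : nat) (Ro ri : R) (x : 'rV[R]_d) : Prop :=
  enorm x <= Ro /\ ~ (enorm x <= ri).

Definition seg_in_annulus (R : realType) (d : nat) (Ro ri : R) (a b : 'rV[R]_d) : Prop :=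
  forall t : R, 0 <= t <= 1 -> in_annulus Ro ri ((1 - t) *: a + t *: b).

(* y_1..y_m on the sphere S(rho), pairwise distance >= 2 c1, maximal
   with this property (no further point of S(rho) can be added). *)
Definition maximal_separated_system (R : realType) (d : nat) (rho c1 : R)
    (m : nat) (y : 'I_m -> 'rV[R]_d) : Prop :=
  (forall i, enorm (y i) = rho) /\
  (forall i j, i != j -> 2 * c1 <= enorm (y i - y j)) /\
  (forall z : 'rV[R]_d, enorm z = rho -> exists i, enorm (z - y i) < 2 * c1).

Definition voronoi (R : realType) (d : nat) (m : nat) (y : 'I_m -> 'rV[R]_d)
    (i : 'I_m) (x : 'rV[R]_d) : Prop :=
  forall j, enorm (x - y i) <= enorm (x - y j).

Definition Wreg (R : realType) (d : nat) (Ro ri : R) (m : nat) (y : 'I_m -> 'rV[R]_d)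
    (i : 'I_m) (x : 'rV[R]_d) : Prop :=
  voronoi y i x /\ in_annulus Ro ri x.

Definition adjacent (R : realType) (d : nat) (Ro ri : R) (m : nat) (y : 'I_m -> 'rV[R]_d)
    (i j : 'I_m) : Prop :=
  i != j /\ exists (ai aj b : 'rV[R]_d),
    [/\ Wreg Ro ri y i ai, Wreg Ro ri y j aj, in_annulus Ro ri b,
        seg_in_annulus Ro ri ai b & seg_in_annulus Ro ri b aj].

Definition degree (R : realType) (d : nat) (Ro ri : R) (m : nat) (y : 'I_m -> 'rV[R]_d)
    (i : 'I_m) : nat :=
  #|[set j : 'I_m | `[< adjacent Ro ri y i j >]]|.

Definition Rad (R : realType) (c0 : R) (n : nat) : R :=
  Num.sqrt (2 * ln (n%:R) + ln ((ln (n%:R)) `^ c0)).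

Definition rho (R : realType) (c : R) (n : nat) : R :=
  Num.sqrt (2 * ln (n%:R) - ln (ln (n%:R)) + ln ((c * ln (ln (n%:R))) ^- 2)).

Definition rin (R : realType) (c c1 : R) (n : nat) : R :=
  rho c n - 5 * c1 ^+ 2 / rho c n.

From Pilot Require Import Defs.
From HB Require Import structures.
From mathcomp Require Import all_boot all_order all_algebra.
From mathcomp Require Import all_classical all_reals all_analysis.
From mathcomp Require Import ring lra.
Import Order.TTheory GRing.Theory Num.Theory.
Local Open Scope ring_scope.

(* A segment inside A(R, r) has squared length at most
   4 (R^2 - r^2), because its midpoint stays outside B(r); a point of W_i lies within
   squared distance 2 (R^2 - r^2) + 8 c1^2 of y_i: project it radially onto S(rho),
   where some y_j is 2 c1-close by maximality, and use the Voronoi property.  So the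
   neighbours of y_i lie on S(rho) within L = O(sqrt (log log n)) of y_i, while
   rho^2 ~ 2 log n.  Pick a coordinate k with rho^2 <= d y_i(k)^2.  Near y_i the sphere is a
   graph over the remaining d - 1 coordinates: if two neighbours differ by at most s
   in those, the identity |u(k)^2 - v(k)^2| = |sum_(m <> k) (v(m)^2 - u(m)^2)| and
   |u(k) + v(k)| >= |y_i(k)| make them closer than 2 c1 once s = c1 / (2 d^2).  Sorting
   the neighbours into cubes of side s in those coordinates is therefore injective,
   which leaves at most (2 L / s + 1)^(d - 1) = O((log log n)^((d - 1) / 2)) of them. *)

Definition cell {R : realType} (s L x : R) : nat := Num.truncn ((x + L) / s).

Lemma cell_le {R : realType} (s L x : R) :
  0 < s -> `|x| <= L -> (cell s L x <= Num.truncn (2 * L / s))%N.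
Proof.
move=> s_gt0; rewrite ler_norml => /andP[lo hi]; apply: le_truncn.
by rewrite ler_pM2r ?invr_gt0 //; lra.
Qed.

Lemma cell_dist {R : realType} {s L x x' : R} :
  0 < s -> `|x| <= L -> `|x'| <= L -> cell s L x = cell s L x' -> `|x - x'| < s.
Proof.
move=> s_gt0; rewrite !ler_norml => /andP[lo hi] /andP[lo' hi'] same_cell.
have v_ge0 z : - L <= z -> 0 <= (z + L) / s by move=> ?; rewrite divr_ge0 //; lra.
have /andP[t1 t2] := truncn_itv (v_ge0 _ lo).
have /andP[t3 t4] := truncn_itv (v_ge0 _ lo').
rewrite -/(cell s L x) -/(cell s L x') same_cell in t1 t2.
have -> : x - x' = s * ((x + L) / s - (x' + L) / s) by field; rewrite gt_eqF.
rewrite normrM gtr0_norm // -[X in _ < X]mulr1 ltr_pM2l // ltr_norml.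
apply/andP; split; lra.
Qed.

Section EuclideanGeometry.
Context {R : realType} {d : nat}.
Implicit Types (x u v a b p q : 'rV[R]_d) (e r s t L : R).

Definition sqnorm x : R := \sum_(k < d) x ord0 k ^+ 2.

Lemma sqnorm_ge0 x : 0 <= sqnorm x.
Proof. by apply: sumr_ge0 => k _; rewrite sqr_ge0. Qed.

Lemma enorm_ge0 x : 0 <= enorm x.
Proof. exact: sqrtr_ge0. Qed.

Lemma enorm_sqr x : enorm x ^+ 2 = sqnorm x.
Proof. by rewrite sqr_sqrtr ?sqnorm_ge0. Qed.

Lemma sqnorm_le_sqr {x e} : enorm x <= e -> sqnorm x <= e ^+ 2.
Proof. by move=> le_xe; rewrite -enorm_sqr; have := enorm_ge0 x; nra. Qed.

Lemma sqnorm_lt_sqr {x e} : enorm x < e -> sqnorm x < e ^+ 2.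
Proof. by move=> lt_xe; rewrite -enorm_sqr; have := enorm_ge0 x; nra. Qed.

Lemma sqr_lt_sqnorm {x e} : 0 <= e -> e < enorm x -> e ^+ 2 < sqnorm x.
Proof. by move=> e_ge0 lt_ex; rewrite -enorm_sqr; nra. Qed.

Lemma sqr_le_sqnorm {x e} : 0 <= e -> e <= enorm x -> e ^+ 2 <= sqnorm x.
Proof. by move=> e_ge0 le_ex; rewrite -enorm_sqr; nra. Qed.

Lemma sqnorm_sqrt_le {x e} : sqnorm x <= e -> enorm x <= Num.sqrt e.
Proof. by move=> le_xe; rewrite ler_sqrt // (le_trans (sqnorm_ge0 x)). Qed.

Lemma sqnormZ t x : sqnorm (t *: x) = t ^+ 2 * sqnorm x.
Proof. by rewrite /sqnorm mulr_sumr; apply: eq_bigr => k _; rewrite !mxE; ring. Qed.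

Lemma sqnormN x : sqnorm (- x) = sqnorm x.
Proof. by rewrite -scaleN1r sqnormZ sqrrN expr1n mul1r. Qed.

Lemma sqnormB_sym u v : sqnorm (u - v) = sqnorm (v - u).
Proof. by rewrite -sqnormN opprB. Qed.

Lemma sqnormD_le u v : sqnorm (u + v) <= 2 * (sqnorm u + sqnorm v).
Proof.
rewrite /sqnorm -big_split /= mulr_sumr; apply: ler_sum => k _; rewrite !mxE.
by have := sqr_ge0 (u ord0 k - v ord0 k); nra.
Qed.

Lemma sqnorm_midpoint a b :
  sqnorm a + sqnorm b = 2 * sqnorm ((1 - 2^-1) *: a + 2^-1 *: b) + sqnorm (a - b) / 2.
Proof.
rewrite /sqnorm -big_split /= mulr_sumr mulr_suml -big_split /=.
by apply: eq_bigr => k _; rewrite !mxE; field.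
Qed.

Lemma sqnorm_bigD1 x k :
  sqnorm x = x ord0 k ^+ 2 + \sum_(m < d | m != k) x ord0 m ^+ 2.
Proof. exact: bigD1. Qed.

Lemma coord_le_enorm x k : `|x ord0 k| <= enorm x.
Proof.
rewrite -sqrtr_sqr /enorm -/(sqnorm x) ler_sqrt ?sqnorm_ge0 // (sqnorm_bigD1 x k) lerDl.
by apply: sumr_ge0 => m _; rewrite sqr_ge0.
Qed.

Lemma exists_coord_sqr_ge x : (0 < d)%N -> exists k, sqnorm x <= d%:R * x ord0 k ^+ 2.
Proof.
move=> d_gt0.
have [k _ kmax] := @arg_maxP _ _ _ (Ordinal d_gt0) xpredT (fun k => x ord0 k ^+ 2) isT.
exists k; rewrite /sqnorm -[d in d%:R]card_ord -sumr_const mulr_suml.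
by apply: ler_sum => m _; rewrite mul1r; exact: kmax.
Qed.

Lemma sum_off_coord_le (k : 'I_d) (F : 'I_d -> R) (c : R) :
  0 <= c -> (forall m, m != k -> F m <= c) -> \sum_(m < d | m != k) F m <= d%:R * c.
Proof.
move=> c_ge0 F_le; apply: le_trans (ler_sum _ F_le) _.
have := sumr_const 'I_d c; rewrite card_ord (bigD1 k) //= -mulr_natl; lra.
Qed.

Lemma sphere_coord_gap {u v r s k} :
  enorm u = r -> enorm v = r -> 0 <= s ->
  (forall m, m != k -> `|u ord0 m - v ord0 m| <= s) ->
  `|(u ord0 k - v ord0 k) * (u ord0 k + v ord0 k)| <= d%:R * (s * (2 * r)).
Proof.
move=> u_r v_r s_ge0 close.
have -> : (u ord0 k - v ord0 k) * (u ord0 k + v ord0 k) =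
    \sum_(m < d | m != k) (v ord0 m - u ord0 m) * (v ord0 m + u ord0 m).
  have := sqnorm_bigD1 u k; have := sqnorm_bigD1 v k; rewrite -!enorm_sqr u_r v_r => ev eu.
  under [RHS]eq_bigr do rewrite -subr_sqr.
  by rewrite -subr_sqr sumrB; lra.
apply: le_trans (ler_norm_sum _ _ _) _.
apply: sum_off_coord_le => [|m m_neq_k]; first by have := enorm_ge0 u; nra.
rewrite normrM distrC ler_pM ?normr_ge0 ?close //.
apply: le_trans (ler_normD _ _) _.
by have := coord_le_enorm u m; have := coord_le_enorm v m; lra.
Qed.

Lemma sphere_sqdist_le {u v r s t k} :
  enorm u = r -> enorm v = r -> 0 <= s ->
  (forall m, m != k -> `|u ord0 m - v ord0 m| <= s) ->
  t != 0 -> r ^+ 2 <= d%:R * t ^+ 2 -> t ^+ 2 <= (u ord0 k + v ord0 k) ^+ 2 ->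
  sqnorm (u - v) <= (4 * d%:R ^+ 3 + d%:R) * s ^+ 2.
Proof.
move=> u_r v_r s_ge0 close t_neq0 r_le.
set D := u ord0 k - v ord0 k; set S := u ord0 k + v ord0 k => t_le.
have DS_le : (D * S) ^+ 2 <= (d%:R * (s * (2 * r))) ^+ 2.
  rewrite -[(D * S) ^+ 2]real_normK ?num_real //.
  have := sphere_coord_gap u_r v_r s_ge0 close.
  by have := normr_ge0 (D * S); nra.
have t2_gt0 : 0 < t ^+ 2 by rewrite exprn_even_gt0.
have D_le : D ^+ 2 <= 4 * d%:R ^+ 3 * s ^+ 2.
  rewrite -(ler_pM2r (lt_le_trans t2_gt0 t_le)).
  have d_s_ge0 : 0 <= 4 * d%:R ^+ 2 * s ^+ 2 by rewrite !mulr_ge0 ?exprn_even_ge0.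
  have := ler_wpM2l d_s_ge0 r_le; have := ler_wpM2l (mulr_ge0 d_s_ge0 (ler0n _ d)) t_le.
  lra.
rewrite (sqnorm_bigD1 _ k) !mxE -/D mulrDl.
apply: lerD => //; apply: sum_off_coord_le => [|m m_neq_k].
  exact: sqr_ge0.
rewrite !mxE -real_normK ?num_real //.
by have := close m m_neq_k; have := normr_ge0 (u ord0 m - v ord0 m); nra.
Qed.

Lemma cap_coord_sum_ge {p q1 q2 L k} :
  enorm (q1 - p) <= L -> enorm (q2 - p) <= L -> (2 * L) ^+ 2 <= p ord0 k ^+ 2 ->
  p ord0 k ^+ 2 <= (q1 ord0 k + q2 ord0 k) ^+ 2.
Proof.
move=> q1_near q2_near pk_ge.
have L_ge0 : 0 <= L := le_trans (enorm_ge0 _) q1_near.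
have {pk_ge} : 2 * L <= `|p ord0 k|.
  by rewrite -(ger0_norm (mulr_ge0 (ler0n _ 2) L_ge0)) -!sqrtr_sqr ler_sqrt ?sqr_ge0.
have := le_trans (coord_le_enorm (q1 - p) k) q1_near.
have := le_trans (coord_le_enorm (q2 - p) k) q2_near.
rewrite !mxE !ler_norml => /andP[lo2 hi2] /andP[lo1 hi1].
have [pk_ge0|pk_lt0] := lerP 0 (p ord0 k).
  by rewrite ger0_norm //; nra.
by rewrite ltr0_norm //; nra.
Qed.

Lemma grid_step_sqr_lt {c1 : R} :
  (0 < d)%N -> 0 < c1 -> (4 * d%:R ^+ 3 + d%:R) * (c1 / (2 * d%:R ^+ 2)) ^+ 2 < (2 * c1) ^+ 2.
Proof.
move=> d_gt0 c1_gt0; have d_ge1 : 1 <= d%:R :> R by rewrite ler1n.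
set s := c1 / _; have s_gt0 : 0 < s by rewrite divr_gt0 // mulr_gt0 // exprn_gt0 //; lra.
have -> : c1 = 2 * d%:R ^+ 2 * s.
  by rewrite /s mulrC divfK // gt_eqF // mulr_gt0 // exprn_gt0 //; lra.
have d_d4 : d%:R <= d%:R ^+ 4 := ler_weXn2l d_ge1 (isT : (1 <= 4)%N).
have d3_d4 : d%:R ^+ 3 <= d%:R ^+ 4 := ler_weXn2l d_ge1 (isT : (3 <= 4)%N).
by have := exprn_gt0 2 s_gt0; nra.
Qed.

Lemma card_separated_cap_le (I : finType) (A : {set I}) (y : I -> 'rV[R]_d) p r (c1 : R) L :
  (0 < d)%N -> 0 < c1 -> 0 < r -> enorm p = r -> 4 * d%:R * L ^+ 2 <= r ^+ 2 ->
  {in A, forall j, enorm (y j) = r /\ enorm (y j - p) <= L} ->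
  {in A &, forall j j', j != j' -> 2 * c1 <= enorm (y j - y j')} ->
  (#|A| <= (Num.truncn (2 * L / (c1 / (2 * d%:R ^+ 2)))).+1 ^ d.-1)%N.
Proof.
move=> d_gt0 c1_gt0 r_gt0 p_r L_small y_cap y_sep.
have d_gt0R : 0 < d%:R :> R by rewrite ltr0n.
set s := c1 / (2 * d%:R ^+ 2).
have s_gt0 : 0 < s by rewrite divr_gt0 // mulr_gt0 // exprn_gt0.
have [k pk_large] := exists_coord_sqr_ge p d_gt0; rewrite -enorm_sqr p_r in pk_large.
have pk_neq0 : p ord0 k != 0 by apply: contraTneq pk_large => ->; nra.
have L_pk : (2 * L) ^+ 2 <= p ord0 k ^+ 2 by rewrite -(ler_pM2l d_gt0R); lra.
have coord_near j m : j \in A -> `|y j ord0 m - p ord0 m| <= L.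
  move=> jA; have := coord_le_enorm (y j - p) m; rewrite !mxE => /le_trans; apply.
  exact: (y_cap j jA).2.
set T := Num.truncn (2 * L / s).
have cell_lt j m : j \in A -> (cell s L (y j ord0 m - p ord0 m) < T.+1)%N.
  by move=> jA; rewrite ltnS cell_le // coord_near.
pose f j := [ffun m' => inord (cell s L (y j ord0 (lift k m') - p ord0 (lift k m'))) : 'I_T.+1].
have f_inj : {in A &, injective f}.
  move=> j j' jA j'A /ffunP f_eq; case: (eqVneq j j') => // j_neq; exfalso.
  have close m : m != k -> `|y j ord0 m - y j' ord0 m| <= s.
    case: (unliftP k m) => [m' ->|->]; last by rewrite eqxx.
    have := f_eq m'; rewrite !ffunE => /(congr1 val) /=.
    rewrite !inordK ?cell_lt // => /(cell_dist s_gt0 (coord_near _ _ jA) (coord_near _ _ j'A)).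
    by rewrite opprB addrA subrK => /ltW.
  have [[yj_r yj_near] [yj'_r yj'_near]] := (y_cap j jA, y_cap j' j'A).
  have := sphere_sqdist_le yj_r yj'_r (ltW s_gt0) close pk_neq0 pk_large
    (cap_coord_sum_ge yj_near yj'_near L_pk).
  have := sqr_le_sqnorm (ltW (mulr_gt0 (ltr0Sn _ 1) c1_gt0)) (y_sep j j' jA j'A j_neq).
  by have := grid_step_sqr_lt d_gt0 c1_gt0; rewrite -/s; lra.
rewrite -(card_in_imset f_inj); apply: leq_trans (max_card _) _.
by rewrite card_ffun !card_ord.
Qed.

Lemma seg_in_annulus_sqdist {Ro ri : R} {a b} :
  0 <= ri -> seg_in_annulus Ro ri a b -> sqnorm (a - b) <= 4 * (Ro ^+ 2 - ri ^+ 2).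
Proof.
move=> ri_ge0 seg_ab.
have [a_le _] : in_annulus Ro ri a.
  by have := seg_ab 0; rewrite subr0 scale1r scale0r addr0; apply; rewrite lexx ler01.
have [b_le _] : in_annulus Ro ri b.
  by have := seg_ab 1; rewrite subrr scale0r add0r scale1r; apply; rewrite ler01 lexx.
have [_ mid_nle] := seg_ab 2^-1 (ltac:(apply/andP; split; lra)).
have mid_gt : ri < enorm ((1 - 2^-1) *: a + 2^-1 *: b) by rewrite ltNge; apply/negP.
have := sqr_lt_sqnorm ri_ge0 mid_gt; have := sqnorm_midpoint a b.
have := sqnorm_le_sqr a_le; have := sqnorm_le_sqr b_le; lra.
Qed.

Section Voronoi.
Context {Ro ri rh c1 : R} {m : nat} {y : 'I_m -> 'rV[R]_d}.

Lemma Wreg_sqdist :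
  0 <= ri -> ri <= rh -> rh <= Ro ->
  (forall z, enorm z = rh -> exists j, enorm (z - y j) < 2 * c1) ->
  forall i a, Wreg Ro ri y i a -> sqnorm (a - y i) <= 2 * (Ro ^+ 2 - ri ^+ 2) + 8 * c1 ^+ 2.
Proof.
move=> ri_ge0 ri_le_rh rh_le_Ro y_cover i a [vor_a [a_le a_nle]].
have a_gt : ri < enorm a by rewrite ltNge; apply/negP.
set na := enorm a in a_le a_gt.
have na_neq0 : na != 0 by rewrite gt_eqF //; lra.
set z := (rh / na) *: a.
have z_sphere : enorm z = rh.
  rewrite /enorm -/(sqnorm z) sqnormZ -enorm_sqr -/na.
  by rewrite -exprMn divfK // sqrtr_sqr ger0_norm //; lra.
have [j z_near] := y_cover z z_sphere.
have a_z : sqnorm (a - z) = (na - rh) ^+ 2.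
  by rewrite /z -{1}(scale1r a) -scalerBl sqnormZ -enorm_sqr -/na; field.
have radial : (na - rh) ^+ 2 <= Ro ^+ 2 - ri ^+ 2 by nra.
have := sqnormD_le (a - z) (z - y j); rewrite addrA subrK.
have := sqnorm_le_sqr (vor_a j); rewrite enorm_sqr.
have := sqnorm_lt_sqr z_near; nra.
Qed.

Lemma adjacent_sqdist i j :
  0 <= ri -> ri <= rh -> rh <= Ro ->
  (forall z, enorm z = rh -> exists j, enorm (z - y j) < 2 * c1) ->
  Defs.adjacent Ro ri y i j -> sqnorm (y j - y i) <= 48 * (Ro ^+ 2 - ri ^+ 2) + 64 * c1 ^+ 2.
Proof.
move=> ri_ge0 ri_le_rh rh_le_Ro y_cover [_ [ai [aj [b [Wi Wj _ seg_ai_b seg_b_aj]]]]].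
have -> : y j - y i = ((y j - aj) + (aj - b)) + ((b - ai) + (ai - y i)).
  by rewrite !addrA !subrK.
have W_sqdist := Wreg_sqdist ri_ge0 ri_le_rh rh_le_Ro y_cover.
have Wi_sqdist := W_sqdist _ _ Wi.
have Wj_sqdist := W_sqdist _ _ Wj; rewrite sqnormB_sym in Wj_sqdist.
have seg1 := seg_in_annulus_sqdist ri_ge0 seg_ai_b; rewrite sqnormB_sym in seg1.
have seg2 := seg_in_annulus_sqdist ri_ge0 seg_b_aj; rewrite sqnormB_sym in seg2.
have := sqnormD_le (y j - aj) (aj - b); have := sqnormD_le (b - ai) (ai - y i).
have := sqnormD_le (y j - aj + (aj - b)) (b - ai + (ai - y i)); lra.
Qed.

Lemma degree_le_grid (L : R) i :
  (0 < d)%N -> 0 < c1 -> 0 < ri -> ri <= rh -> rh <= Ro -> 0 <= L ->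
  48 * (Ro ^+ 2 - ri ^+ 2) + 64 * c1 ^+ 2 <= L ^+ 2 -> 4 * d%:R * L ^+ 2 <= rh ^+ 2 ->
  maximal_separated_system rh c1 y ->
  (degree Ro ri y i <= (Num.truncn (2 * L / (c1 / (2 * d%:R ^+ 2)))).+1 ^ d.-1)%N.
Proof.
move=> d_gt0 c1_gt0 ri_gt0 ri_le_rh rh_le_Ro L_ge0 width_le L_small [y_r [y_sep y_cover]].
rewrite /degree; apply: (card_separated_cap_le _ _ _ (y i) rh c1 L) => // [|j|j j'].
- exact: lt_le_trans ri_gt0 ri_le_rh.
- rewrite inE => /asboolP adj_ij; split => //.
  rewrite -(ger0_norm L_ge0) -sqrtr_sqr; apply: sqnorm_sqrt_le; apply: le_trans width_le.
  exact: adjacent_sqdist (ltW ri_gt0) ri_le_rh rh_le_Ro y_cover adj_ij.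
- by move=> _ _; apply: y_sep.
Qed.

End Voronoi.

End EuclideanGeometry.

Section Asymptotics.
Context {R : realType}.
Implicit Types (x a E : R).

Lemma mul_ln_le E x : 0 <= E -> 0 < x -> E ^+ 2 <= x -> E * ln x <= 2 * x.
Proof.
move=> E_ge0 x_gt0 E2_le; set u := Num.sqrt x.
have u_gt0 : 0 < u by rewrite sqrtr_gt0.
have u2 : u ^+ 2 = x by rewrite sqr_sqrtr // ltW.
have E_le_u : E <= u by rewrite -(ger0_norm E_ge0) -sqrtr_sqr ler_sqrt // ltW.
have ln_x : ln x = 2 * ln u by rewrite -u2 lnXn // mulr_natl.
have := ln_sublinear u_gt0; rewrite ln_x; nra.
Qed.

Lemma sqrtr_exprn_powR x k : 0 <= x -> Num.sqrt x ^+ k = x `^ (k%:R / 2).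
Proof.
by move=> x_ge0; rewrite mulrC powRrM powR12_sqrt // powR_mulrn // sqrtr_ge0.
Qed.

Lemma truncn_exprn_le (deg k : nat) a x :
  0 <= a -> 1 <= x -> (deg <= (Num.truncn (a * Num.sqrt x)).+1 ^ k)%N ->
  deg%:R <= (a + 1) ^+ k * x `^ (k%:R / 2).
Proof.
move=> a_ge0 x_ge1 deg_le.
have sqrt_ge1 : 1 <= Num.sqrt x by rewrite -sqrtr1 ler_sqrt //; lra.
have ax_ge0 : 0 <= a * Num.sqrt x by rewrite mulr_ge0 ?sqrtr_ge0.
rewrite -sqrtr_exprn_powR ?(le_trans ler01) // -exprMn.
apply: le_trans (_ : ((Num.truncn (a * Num.sqrt x)).+1)%:R ^+ k <= _).
  by rewrite -natrX ler_nat.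
apply: lerXn2r; rewrite ?nnegrE ?ler0n ?mulr_ge0 ?sqrtr_ge0 //; first lra.
rewrite -natr1; have := truncn_le (a * Num.sqrt x); rewrite ax_ge0; nra.
Qed.

Lemma sub_div_radius {x a} : 0 <= a -> a < x ^+ 2 -> 0 < x ->
  [/\ 0 < x - a / x, x - a / x <= x & x ^+ 2 - 2 * a <= (x - a / x) ^+ 2].
Proof.
move=> a_ge0 a_lt x_gt0; split.
- by rewrite subr_gt0 ltr_pdivrMr // -expr2.
- by rewrite lerBlDr lerDl divr_ge0 // ltW.
- have -> : (x - a / x) ^+ 2 = x ^+ 2 - 2 * a + (a / x) ^+ 2 by field; rewrite gt_eqF.
  by rewrite lerDl sqr_ge0.
Qed.

End Asymptotics.

Section Radii.
Context {R : realType} (d : nat) (c0 c c1 : R).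

Definition annulus_width_const : R := c0 + 3 + 2 * `|ln c| + 10 * c1 ^+ 2.

Definition neighbour_sqdist_const : R := 48 * annulus_width_const + 64 * c1 ^+ 2.

Definition degree_const : R :=
  (2 * Num.sqrt neighbour_sqdist_const / (c1 / (2 * d%:R ^+ 2)) + 1) ^+ d.-1.

Definition ln_threshold : R :=
  expR (2 * `|ln c| + 1) + (4 * d%:R * neighbour_sqdist_const + 3 + 2 * `|ln c|) ^+ 2.

Lemma neighbour_sqdist_const_ge : 0 <= c0 -> 64 * c1 ^+ 2 <= neighbour_sqdist_const.
Proof.
move=> c0_ge0; rewrite /neighbour_sqdist_const /annulus_width_const.
by have := normr_ge0 (ln c); have := sqr_ge0 c1; lra.
Qed.

Section LargeN.
Variable n : nat.
Let l : R := ln n%:R.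
Let la : R := ln l.

Lemma lnln_ge : ln_threshold <= l -> 2 * `|ln c| + 1 <= la.
Proof.
move=> l_ge; have e_le : expR (2 * `|ln c| + 1) <= l.
  by apply: le_trans l_ge; rewrite lerDl sqr_ge0.
by rewrite -[X in X <= _]expRK ler_ln ?posrE ?expR_gt0 // (lt_le_trans (expR_gt0 _) e_le).
Qed.

Lemma lnln_mul_le : 0 <= c0 -> ln_threshold <= l ->
  (4 * d%:R * neighbour_sqdist_const + 3 + 2 * `|ln c|) * la <= 2 * l.
Proof.
move=> c0_ge0; rewrite /ln_threshold.
set E := 4 * d%:R * _ + _ + _ => l_ge.
have := expR_gt0 (2 * `|ln c| + 1); have := sqr_ge0 E => E2_ge0 e_gt0.
have K2_ge0 := le_trans (mulr_ge0 (ler0n _ 64) (sqr_ge0 c1)) (neighbour_sqdist_const_ge c0_ge0).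
apply: mul_ln_le; try lra.
by rewrite !addr_ge0 ?mulr_ge0 ?ler0n ?normr_ge0.
Qed.

Lemma Rad_sqr : 0 <= c0 -> 0 < l -> 0 <= la -> Rad c0 n ^+ 2 = 2 * l + c0 * la.
Proof.
move=> c0_ge0 l_gt0 la_ge0.
by rewrite /Rad -/l ln_powR -/la sqr_sqrtr (mulrC c0) // addr_ge0 ?mulr_ge0 //; lra.
Qed.

Lemma rho_eq : 0 < c -> 0 < la -> rho c n = Num.sqrt (2 * l - la - 2 * (ln c + ln la)).
Proof.
move=> c_gt0 la_gt0; have cla_gt0 : 0 < c * la by rewrite mulr_gt0.
rewrite /rho -/l -/la lnV ?posrE ?exprn_gt0 // lnXn // lnM ?posrE //.
by congr Num.sqrt; rewrite -mulr_natl; ring.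
Qed.

Lemma rho_sqr_large : 0 < c0 -> 0 < c -> ln_threshold <= l ->
  rho c n ^+ 2 = 2 * l - la - 2 * (ln c + ln la) /\
  4 * d%:R * (neighbour_sqdist_const * la) <= rho c n ^+ 2.
Proof.
move=> c0_gt0 c_gt0 l_ge.
have la_ge := lnln_ge l_ge; have E_la := lnln_mul_le (ltW c0_gt0) l_ge.
have K2_ge := neighbour_sqdist_const_ge (ltW c0_gt0); have c1_sq := sqr_ge0 c1.
have g_ge0 := normr_ge0 (ln c); have /andP[_ lnc_le] : - `|ln c| <= ln c <= `|ln c|.
  by rewrite -ler_norml.
have lnla_le : ln la <= la by apply/ltW/ln_sublinear; lra.
have g_la : `|ln c| <= `|ln c| * la by rewrite ler_peMr //; lra.
have Psq_ge : 4 * d%:R * (neighbour_sqdist_const * la) <= 2 * l - la - 2 * (ln c + ln la).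
  by lra.
have Psq_ge0 : 0 <= 2 * l - la - 2 * (ln c + ln la).
  by apply: le_trans Psq_ge; rewrite !mulr_ge0 ?ler0n //; lra.
by rewrite rho_eq ?sqr_sqrtr //; lra.
Qed.

Lemma radii_large : (0 < d)%N -> 0 < c0 -> 0 < c -> 0 < c1 -> ln_threshold <= l ->
  [/\ 0 < rin c c1 n, rin c c1 n <= rho c n, rho c n <= Rad c0 n,
      48 * (Rad c0 n ^+ 2 - rin c c1 n ^+ 2) + 64 * c1 ^+ 2 <= neighbour_sqdist_const * la
    & 4 * d%:R * (neighbour_sqdist_const * la) <= rho c n ^+ 2].
Proof.
move=> d_gt0 c0_gt0 c_gt0 c1_gt0 l_ge.
have [rho2 rho_large] := rho_sqr_large c0_gt0 c_gt0 l_ge.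
have la_ge := lnln_ge l_ge; have K2_ge := neighbour_sqdist_const_ge (ltW c0_gt0).
have g_ge0 := normr_ge0 (ln c); have /andP[lnc_ge lnc_le] : - `|ln c| <= ln c <= `|ln c|.
  by rewrite -ler_norml.
have la_ge1 : 1 <= la by lra.
have l_gt0 : 0 < l by apply: lt_le_trans l_ge; rewrite ltr_pwDl ?expR_gt0 ?sqr_ge0.
have lnla_ge0 : 0 <= ln la := ln_ge0 la_ge1.
have lnla_le : ln la <= la by apply/ltW/ln_sublinear; lra.
have Rad2 := Rad_sqr (ltW c0_gt0) l_gt0 (le_trans ler01 la_ge1).
have c1_sq := exprn_gt0 2 c1_gt0.
have c1_rho : 5 * c1 ^+ 2 < rho c n ^+ 2.
  have K2_la : 64 * c1 ^+ 2 <= neighbour_sqdist_const * la.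
    by rewrite (le_trans K2_ge) // ler_peMr //; lra.
  have : neighbour_sqdist_const * la <= d%:R * (neighbour_sqdist_const * la).
    by rewrite ler_peMl ?ler1n //; lra.
  by lra.
have rho_gt0 : 0 < rho c n.
  by rewrite lt_neqAle sqrtr_ge0 andbT; apply: contraTneq c1_rho => <-; nra.
have [rin_gt0 rin_le rin2] := sub_div_radius (ltW (mulr_gt0 (ltr0n _ 5) c1_sq)) c1_rho rho_gt0.
split => //.
- have Rad_ge0 : 0 <= Rad c0 n := sqrtr_ge0 _.
  rewrite -(ler_pXn2r (isT : (0 < 2)%N)) ?nnegrE ?(ltW rho_gt0) // rho2 Rad2.
  by have := mulr_ge0 (ltW c0_gt0) (le_trans ler01 la_ge1); lra.
- move: rin2; rewrite /rin Rad2 rho2 /neighbour_sqdist_const /annulus_width_const.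
  have g_la : `|ln c| <= `|ln c| * la by rewrite ler_peMr.
  have c1_la : c1 ^+ 2 <= c1 ^+ 2 * la by rewrite ler_peMr ?sqr_ge0.
  by lra.
Qed.

Lemma degree_le_lnln m (y : 'I_m -> 'rV[R]_d) i :
  (0 < d)%N -> 0 < c0 -> 0 < c -> 0 < c1 -> ln_threshold <= l ->
  maximal_separated_system (rho c n) c1 y ->
  (degree (Rad c0 n) (rin c c1 n) y i)%:R <= degree_const * la `^ ((d%:R - 1) / 2).
Proof.
move=> d_gt0 c0_gt0 c_gt0 c1_gt0 l_ge y_sys.
have [rin_gt0 rin_le_rho rho_le_Rad width_le rho_large] :=
  radii_large d_gt0 c0_gt0 c_gt0 c1_gt0 l_ge.
have la_ge1 : 1 <= la by have := lnln_ge l_ge; have := normr_ge0 (ln c); lra.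
have K2_ge0 : 0 <= neighbour_sqdist_const.
  exact: le_trans (mulr_ge0 (ler0n _ 64) (sqr_ge0 c1)) (neighbour_sqdist_const_ge (ltW c0_gt0)).
set L := Num.sqrt (neighbour_sqdist_const * la).
have L2 : L ^+ 2 = neighbour_sqdist_const * la.
  by rewrite sqr_sqrtr // mulr_ge0 // (le_trans ler01).
rewrite -L2 in width_le rho_large.
have := degree_le_grid L i d_gt0 c1_gt0 rin_gt0 rin_le_rho rho_le_Rad (sqrtr_ge0 _)
  width_le rho_large y_sys.
rewrite /L sqrtrM // mulrA mulrAC => deg_le.
have -> : d%:R - 1 = d.-1%:R :> R by rewrite -{1}(prednK d_gt0) -natr1 addrK.
apply: truncn_exprn_le deg_le => //.
apply: divr_ge0; first by rewrite mulr_ge0 ?sqrtr_ge0.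
by rewrite ltW // divr_gt0 // mulr_gt0 // exprn_gt0 // ltr0n.
Qed.

End LargeN.
End Radii.

Theorem theorem10p2 (R : realType) (d : nat) (c0 c c1 : R) :
  (2 <= d)%N -> 0 < c0 -> 0 < c -> 0 < c1 ->
  exists (C : R) (N : nat), forall n : nat, (N <= n)%N ->
    forall (m : nat) (y : 'I_m -> 'rV[R]_d),
      maximal_separated_system (rho c n) c1 y ->
      forall i : 'I_m,
        (degree (Rad c0 n) (rin c c1 n) y i)%:R
          <= C * (ln (ln (n%:R))) `^ ((d%:R - 1) / 2).
Proof.
move=> d_ge2 c0_gt0 c_gt0 c1_gt0.
exists (degree_const d c0 c c1), (Num.truncn (expR (ln_threshold d c0 c c1))).+1.
move=> n n_ge m y y_sys i; apply: degree_le_lnln => //; first exact: ltnW.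
have n_gt : expR (ln_threshold d c0 c c1) < n%:R.
  by apply: lt_le_trans (truncnS_gt _) _; rewrite ler_nat.
by rewrite -ler_expR lnK ?posrE ?(lt_trans (expR_gt0 _) n_gt) // ltW.
Qed.
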